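(* Let $N\ge 2$ and $K\ge 1$ be integers, $\mathbf{h}_1,\dots,\mathbf{h}_K\in\mathbb{C}^N$, $\Gamma_1,\dots,\Gamma_K>0$, $\sigma_C^2>0$, $P_T>0$, and set $\mathbf{Q}_k=\mathbf{h}_k\mathbf{h}_k^\dagger$, $\rho_k=1+\Gamma_k^{-1}$. Consider the problem $$\min_{\mathbf{W}_1,\dots,\mathbf{W}_{K+1}}\ \mathrm{tr}\Big(\big(\textstyle\sum_{k=1}^{K+1}\mathbf{W}_k\big)^{-1}\Big)$$ subject to $\rho_k\langle\mathbf{Q}_k,\mathbf{W}_k\rangle-\sum_{i=1}^{K+1}\langle\mathbf{Q}_k,\mathbf{W}_i\rangle\ge\sigma_C^2$ for $k=1,\dots,K$, $\sum_{k=1}^{K+1}\mathrm{tr}(\mathbf{W}_k)\le P_T$, and $\mathbf{W}_k\in\mathbb{H}_+^{N\times N}$ for $k=1,\dots,K+1$, where the objective is $+\infty$ if $\sum_k\mathbf{W}_k$ is singular. Suppose this problem has an optimal solution with finite objective value. Then there exists an optimal solution at which all $K+1$ inequality constraints (the $K$ SINR constraints and the power constraint) hold with equality.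
   Context: $\mathbb{H}_+^{N\times N}$ is the set of $N\times N$ Hermitian positive semidefinite matrices; $\langle\mathbf{A},\mathbf{B}\rangle=\mathrm{tr}(\mathbf{A}^\dagger\mathbf{B})$. *)

From HB Require Import structures.
From mathcomp Require Import all_boot all_order all_algebra.
From mathcomp Require Import complex.
From mathcomp Require Import reals constructive_ereal.
Set Implicit Arguments.
Unset Strict Implicit.
Unset Printing Implicit Defensive.
Import Order.TTheory GRing.Theory Num.Theory.
Local Open Scope ring_scope.

Section Defs.
Variable R : realType.
Local Notation C := R[i].

Definition ctr m n (A : 'M[C]_(m, n)) : 'M[C]_(n, m) := map_mx Num.conj (A^T).

Definition hpsd n (A : 'M[C]_n) : Prop :=
  ctr A = A /\ forall v : 'cV[C]_n, 0 <= (ctr v *m A *m v) 0 0.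

Definition frob n (A B : 'M[C]_n) : C := \tr (ctr A *m B).

(* index of the k-th (k < K) matrix among W_1..W_{K+1}; ord_max is W_{K+1} *)
Definition widx K (k : 'I_K) : 'I_K.+1 := widen_ord (leqnSn K) k.

Definition feasible N K (h : 'I_K -> 'cV[C]_N) (Gamma : 'I_K -> R)
    (sigma2 PT : R) (W : 'I_K.+1 -> 'M[C]_N) : Prop :=
  [/\ forall k : 'I_K,
        (real_complex R (1 + (Gamma k)^-1) * frob (h k *m ctr (h k)) (W (widx k))
         - \sum_(i < K.+1) frob (h k *m ctr (h k)) (W i)) >= real_complex R sigma2,
      \sum_(i < K.+1) \tr (W i) <= real_complex R PT
    & forall i, hpsd (W i)].

Definition objective N K (W : 'I_K.+1 -> 'M[C]_N) : \bar R :=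
  let S := \sum_(i < K.+1) W i in
  if S \in unitmx then ((complex.Re (\tr (invmx S)))%:E)%E else (+oo)%E.

Definition optimal N K (h : 'I_K -> 'cV[C]_N) (Gamma : 'I_K -> R)
    (sigma2 PT : R) (W : 'I_K.+1 -> 'M[C]_N) : Prop :=
  feasible h Gamma sigma2 PT W /\
  forall W', feasible h Gamma sigma2 PT W' -> (objective W <= objective W')%E.

End Defs.

From HB Require Import structures.
From mathcomp Require Import all_boot all_order all_algebra.
From mathcomp Require Import complex.
From mathcomp Require Import reals constructive_ereal.
From mathcomp Require Import ring.
Import Order.TTheory GRing.Theory Num.Theory.
Local Open Scope ring_scope.

(* Scaling every W_k by PT / tr(sum W) >= 1 keeps the SINR constraints (they are
   homogeneous with a positive right-hand side), makes the power constraint tight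
   and cannot increase tr((sum W)^-1).  Then, for each k, a fraction t_k of W_k is
   moved into the artificial-noise matrix W_{K+1}: this leaves sum W, hence the
   objective, the power and every received power <Q_k, sum W>, unchanged, while
   t_k is chosen so that the k-th SINR constraint becomes tight. *)

Set Implicit Arguments.
Unset Strict Implicit.

Section Hermitian.
Variable R : realType.
Local Notation C := R[i].

Lemma ctrD m n (A B : 'M[C]_(m, n)) : ctr (A + B) = ctr A + ctr B.
Proof. by rewrite /ctr linearD /= map_mxD. Qed.

Lemma ctrZ m n (a : C) (A : 'M[C]_(m, n)) : ctr (a *: A) = a^* *: ctr A.
Proof. by rewrite /ctr linearZ /= map_mxZ. Qed.

Lemma ctrN m n (A : 'M[C]_(m, n)) : ctr (- A) = - ctr A.
Proof. by rewrite -scaleN1r ctrZ conjCN1 scaleN1r. Qed.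

Lemma ctr0 m n : ctr (0 : 'M[C]_(m, n)) = 0.
Proof. by apply/matrixP => i j; rewrite !mxE conjC0. Qed.

Lemma ctrM m n p (A : 'M[C]_(m, n)) (B : 'M[C]_(n, p)) :
  ctr (A *m B) = ctr B *m ctr A.
Proof. by rewrite /ctr trmx_mul map_mxM. Qed.

Lemma ctrK m n (A : 'M[C]_(m, n)) : ctr (ctr A) = A.
Proof. by apply/matrixP => i j; rewrite !mxE conjCK. Qed.

Lemma ctr_delta n (i : 'I_n) : ctr (delta_mx i 0 : 'cV[C]_n) = delta_mx 0 i.
Proof.
apply/matrixP => a b; rewrite !mxE.
by case: (_ == _); case: (_ == _); rewrite /= ?conjC1 ?conjC0.
Qed.

Lemma quad_delta n (A : 'M[C]_n) (i : 'I_n) :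
  (ctr (delta_mx i 0 : 'cV[C]_n) *m A *m (delta_mx i 0 : 'cV[C]_n)) 0 0 = A i i.
Proof. by rewrite ctr_delta -rowE -colE !mxE. Qed.

Lemma hpsd0 n : hpsd (0 : 'M[C]_n).
Proof. by split=> [|v]; rewrite ?ctr0 // mulmx0 mul0mx mxE. Qed.

Lemma hpsdD n (A B : 'M[C]_n) : hpsd A -> hpsd B -> hpsd (A + B).
Proof.
move=> [hA pA] [hB pB]; split; first by rewrite ctrD hA hB.
by move=> v; rewrite mulmxDr mulmxDl mxE addr_ge0.
Qed.

Lemma hpsdZ n (a : C) (A : 'M[C]_n) : 0 <= a -> hpsd A -> hpsd (a *: A).
Proof.
move=> a_ge0 [hA pA]; split; first by rewrite ctrZ hA geC0_conj.
by move=> v; rewrite -scalemxAr -scalemxAl mxE mulr_ge0.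
Qed.

Lemma hpsd_sum n I (r : seq I) (P : pred I) (F : I -> 'M[C]_n) :
  (forall i, P i -> hpsd (F i)) -> hpsd (\sum_(i <- r | P i) F i).
Proof.
move=> hF; elim/big_rec: _ => [|i A Pi hA]; first exact: hpsd0.
exact: hpsdD (hF _ Pi) hA.
Qed.

Lemma hpsd_diag_ge0 n (A : 'M[C]_n) (i : 'I_n) : hpsd A -> 0 <= A i i.
Proof. by move=> [_ pA]; rewrite -quad_delta. Qed.

Lemma hpsd_tr_ge0 n (A : 'M[C]_n) : hpsd A -> 0 <= \tr A.
Proof. by move=> hA; rewrite sumr_ge0 // => i _; apply: hpsd_diag_ge0. Qed.

Lemma hpsd_invmx n (A : 'M[C]_n) : hpsd A -> A \in unitmx -> hpsd (invmx A).
Proof.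
move=> [hA pA] uA; have hAi : ctr (invmx A) = invmx A.
  by rewrite /ctr trmx_inv map_invmx; congr invmx.
split=> // v; set u := invmx A *m v.
have -> : v = A *m u by rewrite /u mulmxA mulmxV // mul1mx.
by rewrite ctrM hA -!mulmxA mulKmx // mulmxA; apply: pA.
Qed.

Lemma dotmx_selfE n (y : 'cV[C]_n) : (ctr y *m y) 0 0 = \sum_j (y j 0)^* * y j 0.
Proof. by rewrite mxE; apply: eq_bigr => j _; rewrite !mxE. Qed.

Lemma dotmx_self_ge0 n (y : 'cV[C]_n) : 0 <= (ctr y *m y) 0 0.
Proof. by rewrite dotmx_selfE sumr_ge0 // => j _; rewrite mulrC mul_conjC_ge0. Qed.

Lemma dotmx_self_eq0 n (y : 'cV[C]_n) : (ctr y *m y) 0 0 = 0 -> y = 0.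
Proof.
rewrite dotmx_selfE => /psumr_eq0P y0; apply/matrixP => j k.
rewrite (ord1 k) mxE; apply/eqP; rewrite -mul_conjC_eq0 mulrC y0 //.
by move=> i _; rewrite mulrC mul_conjC_ge0.
Qed.

(* Expanding the quadratic form at x - t A x with t = |Ax|^2 / (c + 1), where
   c = (Ax)^* A (Ax), gives 0 <= x^* A x - t |Ax|^2, so x^* A x = 0 forces Ax = 0. *)
Lemma hpsd_quad_eq0 n (A : 'M[C]_n) (x : 'cV[C]_n) : hpsd A ->
  (ctr x *m A *m x) 0 0 = 0 -> A *m x = 0.
Proof.
move=> [hA pA] qx0; set y := A *m x; apply: dotmx_self_eq0.
set a := (ctr y *m y) 0 0; set c := (ctr y *m A *m y) 0 0.
have c_ge0 : 0 <= c by apply: pA.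
have c1_gt0 : 0 < c + 1 by rewrite ltr_wpDl.
set t := a / (c + 1).
have t_ge0 : 0 <= t by rewrite divr_ge0 ?dotmx_self_ge0 ?ltW.
have tc_le : t * c <= a.
  rewrite /t mulrAC ler_pdivrMr // ler_wpM2l ?dotmx_self_ge0 //.
  by rewrite lerDl ler01.
have quadE : (ctr (x - t *: y) *m A *m (x - t *: y)) 0 0 = - (t * a) - t * a + t * t * c.
  have ctr_xAy : ctr x *m A *m y = ctr y *m y by rewrite /y ctrM hA.
  rewrite ctrD ctrN ctrZ geC0_conj // mulmxDl mulmxDr !mulmxDl !mulNmx !mulmxN.
  rewrite opprK -!scalemxAl -!scalemxAr scalerA ctr_xAy -[ctr y *m A *m x]mulmxA.
  by rewrite ![(_ + _ : 'M_1) _ _]mxE ![(- _ : 'M_1) _ _]mxE ![(_ *: _ : 'M_1) _ _]mxE qx0 -/a -/c; ring.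
have ta_le0 : t * a <= 0.
  have := pA (x - t *: y); rewrite quadE -mulrA.
  have : t * (t * c) <= t * a by rewrite ler_wpM2l.
  move=> ttc_le q_ge0; have := le_trans q_ge0 (lerD (lexx _) ttc_le).
  by rewrite -addrA addNr addr0 oppr_ge0.
have := dotmx_self_ge0 y; rewrite le0r -/a => /orP[/eqP // | a_gt0].
by rewrite (lt_geF (mulr_gt0 (divr_gt0 a_gt0 c1_gt0) a_gt0)) in ta_le0.
Qed.

Lemma hpsd_tr_eq0 n (A : 'M[C]_n) : hpsd A -> \tr A = 0 -> A = 0.
Proof.
move=> hA /eqP; rewrite psumr_eq0 => [/allP diag0|i _]; last exact: hpsd_diag_ge0.
apply/matrixP => j i.
have : A *m (delta_mx i 0 : 'cV[C]_n) = 0.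
  by apply: hpsd_quad_eq0; rewrite // quad_delta; apply/eqP/diag0/mem_index_enum.
by rewrite -colE => /matrixP /(_ j 0); rewrite !mxE.
Qed.

Lemma frob_sum n (A : 'M[C]_n) I (r : seq I) (P : pred I) (F : I -> 'M[C]_n) :
  frob A (\sum_(i <- r | P i) F i) = \sum_(i <- r | P i) frob A (F i).
Proof. by rewrite /frob mulmx_sumr raddf_sum. Qed.

Lemma frobZ n (A B : 'M[C]_n) a : frob A (a *: B) = a * frob A B.
Proof. by rewrite /frob -scalemxAr mxtraceZ. Qed.

Lemma frob_rank1 n (h : 'cV[C]_n) (W : 'M[C]_n) :
  frob (h *m ctr h) W = (ctr h *m W *m h) 0 0.
Proof. by rewrite /frob ctrM ctrK -mulmxA mxtrace_mulC trace_mx11. Qed.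

Lemma frob_rank1_ge0 n (h : 'cV[C]_n) (W : 'M[C]_n) :
  hpsd W -> 0 <= frob (h *m ctr h) W.
Proof. by move=> [_ pW]; rewrite frob_rank1. Qed.

Lemma objective_scale_le N K (c : C) (W : 'I_K.+1 -> 'M[C]_N) :
  1 <= c -> (forall i, hpsd (W i)) ->
  (objective (fun i => c *: W i) <= objective W)%E.
Proof.
move=> c_ge1 hW; pose S : 'M[C]_N := \sum_(i < K.+1) W i.
have c_gt0 : 0 < c := lt_le_trans ltr01 c_ge1.
have c_unit : c \is a GRing.unit by rewrite unitfE gt_eqF.
rewrite /objective -/S -scaler_sumr -/S unitmxZ //.
case: ifP => [uS | _]; last exact: leey.
rewrite invmxZ ?unitmxZ // mxtraceZ lee_fin.
have tr_ge0 : 0 <= \tr (invmx S).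
  exact/hpsd_tr_ge0/(hpsd_invmx _ uS)/hpsd_sum.
have : c^-1 * \tr (invmx S) <= \tr (invmx S) by rewrite ler_piMl ?invf_le1.
by rewrite lecE => /andP[].
Qed.

End Hermitian.

Section Beamforming.
Variables (R : realType) (N K : nat) (h : 'I_K -> 'cV[R[i]]_N) (Gamma : 'I_K -> R).
Variables (sigma2 PT : R).
Hypothesis sigma2_gt0 : 0 < sigma2.
Local Notation C := R[i].
Local Notation feasible := (feasible h Gamma sigma2 PT).
Local Notation "x %:C" := (real_complex R x).

Definition sinr_coef k : C := (1 + (Gamma k)^-1)%:C.

Definition signal (W : 'I_K.+1 -> 'M[C]_N) k := frob (h k *m ctr (h k)) (W (widx k)).

Definition received (W : 'I_K.+1 -> 'M[C]_N) k :=
  \sum_(i < K.+1) frob (h k *m ctr (h k)) (W i).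

Definition sinr_margin W k := sinr_coef k * signal W k - received W k.

Definition total_power (W : 'I_K.+1 -> 'M[C]_N) := \sum_(i < K.+1) \tr (W i).

Lemma received_ge0 W k : (forall i, hpsd (W i)) -> 0 <= received W k.
Proof. by move=> hW; rewrite sumr_ge0 // => i _; apply: frob_rank1_ge0. Qed.

Lemma feasible_sinr_signal_gt0 W k : feasible W -> 0 < sinr_coef k * signal W k.
Proof.
case=> sinr _ hW; rewrite -(subrK (received W k) (sinr_coef k * _)).
have := lerD (sinr k) (received_ge0 k hW); rewrite addr0; apply: lt_le_trans.
by rewrite ltcR.
Qed.

Lemma feasible_total_power_gt0 W : (0 < K)%N -> feasible W -> 0 < total_power W.
Proof.
move=> K_gt0 feasW; have [_ _ hW] := feasW.
have T_ge0 : 0 <= total_power W by rewrite sumr_ge0 // => i _; apply: hpsd_tr_ge0.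
rewrite lt_def T_ge0 andbT; apply/eqP => /psumr_eq0P T0.
have W0 i : W i = 0 by apply: hpsd_tr_eq0 => //; apply: T0 => // j _; apply: hpsd_tr_ge0.
have := feasible_sinr_signal_gt0 (Ordinal K_gt0) feasW.
by rewrite /signal W0 /frob mulmx0 mxtrace0 mulr0 ltxx.
Qed.

Lemma sinr_margin_scale (c : C) W k :
  sinr_margin (fun i => c *: W i) k = c * sinr_margin W k.
Proof.
rewrite /sinr_margin /signal /received /=; under eq_bigr do rewrite frobZ.
by rewrite frobZ -mulr_sumr mulrCA -mulrBr.
Qed.

Lemma total_power_scale (c : C) W : total_power (fun i => c *: W i) = c * total_power W.
Proof. by rewrite /total_power mulr_sumr; under eq_bigr do rewrite mxtraceZ. Qed.

Lemma feasible_scale (c : C) W : 1 <= c -> c * total_power W <= PT%:C ->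
  feasible W -> feasible (fun i => c *: W i).
Proof.
move=> c_ge1 power_le [sinr _ hW]; split=> [k | | i].
- rewrite [X in _ <= X]sinr_margin_scale; apply: (le_trans (sinr k)).
  by rewrite ler_peMl // (le_trans _ (sinr k)) // lecR ltW.
- by rewrite [X in X <= _]total_power_scale.
- by apply: hpsdZ (hW i); rewrite (le_trans ler01).
Qed.

(* The share of W_k to move into W_{K+1} so that the k-th SINR margin drops to sigma2. *)
Definition tighten_fraction W k :=
  (sinr_margin W k - sigma2%:C) / (sinr_coef k * signal W k).

Definition tighten W (i : 'I_K.+1) : 'M[C]_N :=
  if insub (val i) is Some k then (1 - tighten_fraction W k) *: W i
  else W i + \sum_(k < K) tighten_fraction W k *: W (widx k).

Lemma tighten_widx W k : tighten W (widx k) = (1 - tighten_fraction W k) *: W (widx k).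
Proof. by rewrite /tighten /widx /= valK. Qed.

Lemma sum_tighten W : \sum_(i < K.+1) tighten W i = \sum_(i < K.+1) W i.
Proof.
rewrite !big_ord_recr /= [tighten W ord_max]/tighten /= insubN ?ltnn //.
under eq_bigr do rewrite tighten_widx scalerBl scale1r.
by rewrite sumrB [W ord_max + _]addrC addrA subrK.
Qed.

Lemma received_tighten W k : received (tighten W) k = received W k.
Proof. by rewrite /received -!frob_sum sum_tighten. Qed.

Lemma total_power_tighten W : total_power (tighten W) = total_power W.
Proof. by rewrite /total_power -!raddf_sum sum_tighten. Qed.

Lemma objective_tighten W : objective (tighten W) = objective W.
Proof. by rewrite /objective sum_tighten. Qed.

Lemma tighten_fraction_ge0 W k : feasible W -> 0 <= tighten_fraction W k.
Proof.
move=> feasW; have [sinr _ _] := feasW.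
by rewrite divr_ge0 ?subr_ge0 ?sinr // ltW ?feasible_sinr_signal_gt0.
Qed.

Lemma tighten_fraction_le1 W k : feasible W -> tighten_fraction W k <= 1.
Proof.
move=> feasW; have [_ _ hW] := feasW.
rewrite ler_pdivrMr ?feasible_sinr_signal_gt0 // mul1r /sinr_margin -addrA gerDl.
by rewrite -opprD oppr_le0 addr_ge0 ?received_ge0 // lecR ltW.
Qed.

Lemma sinr_margin_tighten W k : feasible W -> sinr_margin (tighten W) k = sigma2%:C.
Proof.
move=> feasW; have signal_neq0 : sinr_coef k * signal W k != 0.
  by rewrite gt_eqF ?feasible_sinr_signal_gt0.
rewrite /sinr_margin received_tighten /signal tighten_widx frobZ -/(signal W k).
rewrite mulrCA mulrBl mul1r /tighten_fraction divfK //= /sinr_margin.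
set a := sinr_coef k * signal W k; set r := received W k; ring.
Qed.

Lemma feasible_tighten W : feasible W -> feasible (tighten W).
Proof.
move=> feasW; have [_ power_le hW] := feasW; split=> [k | | i].
- by rewrite [X in _ <= X]sinr_margin_tighten.
- by rewrite [X in X <= _]total_power_tighten.
- rewrite /tighten; case: insub => [k|].
    by apply: hpsdZ (hW i); rewrite subr_ge0 tighten_fraction_le1.
  apply: hpsdD (hW i) _; apply: hpsd_sum => k _.
  exact: hpsdZ (tighten_fraction_ge0 k feasW) (hW _).
Qed.

End Beamforming.

Theorem theorem2 (R : realType) (N K : nat) (hN : (2 <= N)%N) (hK : (1 <= K)%N)
  (h : 'I_K -> 'cV[R[i]]_N) (Gamma : 'I_K -> R) (sigma2 PT : R)
  (hGamma : forall k, 0 < Gamma k) (hsigma : 0 < sigma2) (hPT : 0 < PT) :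
  (exists W, optimal h Gamma sigma2 PT W /\ (objective W < +oo)%E) ->
  exists W, optimal h Gamma sigma2 PT W /\
    (forall k : 'I_K,
       real_complex R (1 + (Gamma k)^-1) * frob (h k *m ctr (h k)) (W (widx k))
       - \sum_(i < K.+1) frob (h k *m ctr (h k)) (W i) = real_complex R sigma2) /\
    \sum_(i < K.+1) \tr (W i) = real_complex R PT.
Proof.
move=> [W [[feasW optW] _]].
have T_gt0 := feasible_total_power_gt0 hsigma hK feasW.
pose c := real_complex R PT / total_power W.
have c_ge1 : 1 <= c by rewrite ler_pdivlMr // mul1r; case: feasW.
have power_c : c * total_power W = real_complex R PT by rewrite divfK ?gt_eqF.
pose W1 i := c *: W i.
have feasW1 : feasible h Gamma sigma2 PT W1.
  by apply: feasible_scale; rewrite ?power_c.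
exists (tighten h Gamma sigma2 W1); split; last split.
- split=> [|V feasV]; first exact: (feasible_tighten hsigma feasW1).
  rewrite objective_tighten; apply: le_trans (optW _ feasV).
  by apply: objective_scale_le => //; case: feasW => _ _.
- by move=> k; apply: (sinr_margin_tighten hsigma k feasW1).
- by rewrite -[LHS]/(total_power _) total_power_tighten total_power_scale.
Qed.
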